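(* Let $\mathbf{E},\mathbf{Y}$ be Euclidean spaces, $\mathcal{X}\subset\mathbf{E}$ nonempty closed convex, $h\colon\mathbf{Y}\to\mathbb{R}$ convex, $F\colon\mathbf{E}\to\mathbf{Y}$ continuously differentiable, $f=h\circ F$, $f_x(y)=h(F(x)+\nabla F(x)(y-x))$, and $\partial f(x)=\nabla F(x)^*\partial h(F(x))$. Assume $\mathcal{X}^*=\operatorname{argmin}_{\mathcal{X}}f\ne\emptyset$, $f(x)-\min_{\mathcal{X}}f\ge\mu\,\mathrm{dist}(x,\mathcal{X}^* )$ for all $x\in\mathcal{X}$, and $|f(y)-f_x(y)|\le a\|y-x\|^2+b\|y-x\|$ for all $x,y\in\mathcal{X}$, where $a>0$, $b\ge0$ and $\mu>2b$. Let $L:=\sup\{\|\zeta\|:\zeta\in\partial f(x),\,x\in\mathcal{X},\,\mathrm{dist}(x,\mathcal{X}^* )\le\frac{\mu-2b}{2a}\}$, assumed finite and positive. Let $\gamma\in(0,1)$ and let $x_0\in\mathcal{X}$ satisfy $\mathrm{dist}(x_0,\mathcal{X}^* )\le\gamma\frac{\mu-2b}{2a}$. Then the iterates of the Polyak subgradient method started at $x_0$ satisfy $$\mathrm{dist}^2(x_{k+1},\mathcal{X}^* )\le\Big(1-\frac{(1-\gamma)\mu(\mu-2b)}{L^2}\Big)\mathrm{dist}^2(x_k,\mathcal{X}^* )\quad\forall k\ge0.$$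
   Context: $\|\cdot\|$ is the Euclidean norm, $\mathrm{dist}$ the Euclidean distance, $\mathrm{proj}_{\mathcal{X}}$ the Euclidean projection, $\nabla F(x)^*$ the adjoint of the Jacobian, and $\partial h$ the convex subdifferential. Polyak subgradient method: given $x_k$, choose $\zeta_k\in\partial f(x_k)$; if $\zeta_k=0$ set $x_{k+1}=x_k$, otherwise $x_{k+1}=\mathrm{proj}_{\mathcal{X}}\big(x_k-\frac{f(x_k)-\min_{\mathcal{X}}f}{\|\zeta_k\|^2}\zeta_k\big)$. *)

(* Euclidean spaces are modelled concretely as R^n = Fin.t n -> R
   with the standard inner product. *)
From Stdlib Require Import Reals Lra.
From Stdlib Require Fin.
Open Scope R_scope.

Definition vec (n : nat) := Fin.t n -> R.

Fixpoint fsum (n : nat) : (Fin.t n -> R) -> R :=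
  match n return (Fin.t n -> R) -> R with
  | O => fun _ => 0
  | S m => fun f => f Fin.F1 + fsum m (fun i => f (Fin.FS i))
  end.

Definition vadd {n} (u v : vec n) : vec n := fun i => u i + v i.
Definition vsub {n} (u v : vec n) : vec n := fun i => u i - v i.
Definition vscale {n} (c : R) (v : vec n) : vec n := fun i => c * v i.
Definition vzero {n} : vec n := fun _ => 0.
Definition dot {n} (u v : vec n) : R := fsum n (fun i => u i * v i).
Definition norm {n} (v : vec n) : R := sqrt (dot v v).

(* m x n matrices = linear maps R^n -> R^m; matvec and the adjoint (transpose) *)
Definition mat (m n : nat) := Fin.t m -> Fin.t n -> R.
Definition matvec {m n} (A : mat m n) (v : vec n) : vec m :=
  fun i => fsum n (fun j => A i j * v j).
Definition adjvec {m n} (A : mat m n) (w : vec m) : vec n :=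
  fun j => fsum m (fun i => A i j * w i).

Definition convex_set {n} (S : vec n -> Prop) : Prop :=
  forall x y t, S x -> S y -> 0 <= t <= 1 ->
    S (vadd (vscale t x) (vscale (1 - t) y)).
Definition closed_vset {n} (S : vec n -> Prop) : Prop :=
  forall x, (forall eps, 0 < eps -> exists y, S y /\ norm (vsub y x) < eps) -> S x.

Definition convex_fun {m} (h : vec m -> R) : Prop :=
  forall x y t, 0 <= t <= 1 ->
    h (vadd (vscale t x) (vscale (1 - t) y)) <= t * h x + (1 - t) * h y.

Definition has_jacobian {n m} (F : vec n -> vec m) (J : vec n -> mat m n) : Prop :=
  forall x eps, 0 < eps -> exists delta, 0 < delta /\
    forall y, norm (vsub y x) < delta ->
      norm (vsub (vsub (F y) (F x)) (matvec (J x) (vsub y x))) <= eps * norm (vsub y x).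
Definition continuous_jacobian {n m} (J : vec n -> mat m n) : Prop :=
  forall x i j eps, 0 < eps -> exists delta, 0 < delta /\
    forall y, norm (vsub y x) < delta -> Rabs (J y i j - J x i j) < eps.
Definition C1_with_jacobian {n m} (F : vec n -> vec m) (J : vec n -> mat m n) : Prop :=
  has_jacobian F J /\ continuous_jacobian J.

Definition subgrad {m} (h : vec m -> R) (y g : vec m) : Prop :=
  forall z, h y + dot g (vsub z y) <= h z.

Definition subdiff_comp {n m} (h : vec m -> R) (F : vec n -> vec m)
    (J : vec n -> mat m n) (x zeta : vec n) : Prop :=
  exists v, subgrad h (F x) v /\ zeta = adjvec (J x) v.

Definition is_inf (E : R -> Prop) (l : R) : Prop :=
  (forall r, E r -> l <= r) /\ (forall b, (forall r, E r -> b <= r) -> b <= l).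
Definition is_sup (E : R -> Prop) (l : R) : Prop :=
  (forall r, E r -> r <= l) /\ (forall b, (forall r, E r -> r <= b) -> l <= b).

Definition is_dist {n} (S : vec n -> Prop) (x : vec n) (d : R) : Prop :=
  is_inf (fun r => exists y, S y /\ r = norm (vsub x y)) d.

Definition is_proj {n} (S : vec n -> Prop) (z p : vec n) : Prop :=
  S p /\ forall q, S q -> norm (vsub z p) <= norm (vsub z q).

(* Write Xs for the solution set, g(x) = f(x) - min_X f, c = (mu-2b)/(2a).
   One Polyak step from x with subgradient zeta and step t = g(x)/|zeta|^2
   is analysed against every solution xb:
   - nonexpansiveness of the projection and the chain rule for subgradients
     combined with the two-sided model bound give
       |x+ - xb|^2 + t g(x) <= (1 + 2at) r^2 + 2bt r,   r = |x - xb|;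
   - taking the infimum over xb (the right side is increasing in r) replaces
     r by dist(x, Xs);
   - sharpness g(x) >= mu dist(x, Xs), the tube bound |zeta| <= L and
     dist(x, Xs) <= gamma c then yield the contraction factor by pure real
     arithmetic.  A zero subgradient inside the tube forces dist(x, Xs) = 0.
   Since the factor is at most 1, an induction shows that the iterates never
   leave X and the tube, so the one-step estimate applies at every k. *)
From Stdlib Require Import Reals Lra Classical FunctionalExtensionality.
From Stdlib Require Fin.
Open Scope R_scope.

Lemma fsum_ext n (f g : Fin.t n -> R) : (forall i, f i = g i) -> fsum n f = fsum n g.
Proof.
  revert f g; induction n as [|n IH]; intros f g H; simpl; auto.
  rewrite H, (IH (fun i => f (Fin.FS i)) (fun i => g (Fin.FS i))); auto.
Qed.

Lemma fsum_add n (f g : Fin.t n -> R) :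
  fsum n (fun i => f i + g i) = fsum n f + fsum n g.
Proof. revert f g; induction n as [|n IH]; intros f g; simpl; [ring|rewrite IH; ring]. Qed.

Lemma fsum_scal n (f : Fin.t n -> R) c : fsum n (fun i => c * f i) = c * fsum n f.
Proof. revert f; induction n as [|n IH]; intros f; simpl; [ring|rewrite IH; ring]. Qed.

Lemma fsum_nonneg n (f : Fin.t n -> R) : (forall i, 0 <= f i) -> 0 <= fsum n f.
Proof.
  revert f; induction n as [|n IH]; intros f H; simpl; [lra|].
  pose proof (H Fin.F1). pose proof (IH (fun i => f (Fin.FS i)) (fun i => H _)). lra.
Qed.

Lemma fsum_zero_inv n (f : Fin.t n -> R) :
  (forall i, 0 <= f i) -> fsum n f = 0 -> forall i, f i = 0.
Proof.
  revert f; induction n as [|n IH]; intros f H E i; [inversion i|].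
  simpl in E. pose proof (H Fin.F1).
  pose proof (fsum_nonneg n (fun i => f (Fin.FS i)) (fun i => H _)).
  apply (Fin.caseS' i (fun i => f i = 0)); [lra|].
  intro j. apply (IH (fun i => f (Fin.FS i))); [intros; apply H | lra].
Qed.

Lemma fsum_swap n m (f : Fin.t n -> Fin.t m -> R) :
  fsum n (fun i => fsum m (fun j => f i j)) = fsum m (fun j => fsum n (fun i => f i j)).
Proof.
  revert f; induction n as [|n IH]; intros f; simpl.
  - clear f. induction m as [|m IHm]; simpl; [reflexivity|rewrite <- IHm; ring].
  - rewrite IH, <- fsum_add. reflexivity.
Qed.

Lemma dot_nonneg n (u : vec n) : 0 <= dot u u.
Proof. apply fsum_nonneg; intros; nra. Qed.

Lemma norm_nonneg n (u : vec n) : 0 <= norm u.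
Proof. apply sqrt_pos. Qed.

Lemma norm_sq n (u : vec n) : norm u ^ 2 = dot u u.
Proof. apply pow2_sqrt, dot_nonneg. Qed.

Lemma norm_sym n (u v : vec n) : norm (vsub u v) = norm (vsub v u).
Proof. unfold norm. f_equal. unfold dot, vsub. apply fsum_ext; intros; ring. Qed.

Lemma dot_sq_lincomb n (w u v : vec n) s t :
  (forall i, w i = s * u i + t * v i) ->
  dot w w = s ^ 2 * dot u u + 2 * s * t * dot u v + t ^ 2 * dot v v.
Proof.
  intro Hw. unfold dot. rewrite <- !fsum_scal, <- !fsum_add.
  apply fsum_ext; intro i; rewrite Hw; ring.
Qed.

Lemma dot_zero_l n (v : vec n) : dot vzero v = 0.
Proof.
  unfold dot, vzero. transitivity (fsum n (fun i => 0 * v i)).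
  - apply fsum_ext; intros; ring.
  - rewrite fsum_scal. ring.
Qed.

Lemma dot_self_eq0 n (z : vec n) : dot z z = 0 -> z = vzero.
Proof.
  intro H. apply functional_extensionality; intro i. unfold vzero.
  pose proof (fsum_zero_inv n (fun i => z i * z i) (fun i => ltac:(nra)) H i). nra.
Qed.

Lemma dot_adj n m (J : mat m n) v u : dot v (matvec J u) = dot (adjvec J v) u.
Proof.
  unfold dot, matvec, adjvec.
  transitivity (fsum m (fun i => fsum n (fun j => J i j * v i * u j))).
  - apply fsum_ext; intros. rewrite <- fsum_scal. apply fsum_ext; intros; ring.
  - rewrite fsum_swap. apply fsum_ext; intros. rewrite Rmult_comm, <- fsum_scal.
    apply fsum_ext; intros; ring.
Qed.

Lemma le_of_le_add_eps A B K : (forall eps, 0 < eps <= 1 -> A <= B + eps * K) -> A <= B.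
Proof.
  intros H. destruct (Rle_or_lt A B) as [|Hlt]; auto.
  assert (HK : 0 < Rabs K + 1) by (pose proof (Rabs_pos K); lra).
  set (e := Rmin 1 ((A - B) / (2 * (Rabs K + 1)))).
  assert (He1 : e <= 1) by apply Rmin_l.
  assert (He2 : e * (2 * (Rabs K + 1)) <= A - B).
  { pose proof (Rmin_r 1 ((A - B) / (2 * (Rabs K + 1)))) as Hr.
    apply (Rmult_le_compat_r (2 * (Rabs K + 1))) in Hr; [|lra].
    fold e in Hr. unfold Rdiv in Hr. rewrite Rmult_assoc, Rinv_l in Hr; lra. }
  assert (He0 : 0 < e) by (apply Rmin_glb_lt; [lra|apply Rdiv_lt_0_compat; lra]).
  specialize (H e (conj He0 He1)).
  pose proof (Rle_abs K). assert (e * K <= e * Rabs K) by (apply Rmult_le_compat_l; lra).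
  lra.
Qed.

Lemma dist_exists n (S : vec n -> Prop) x : (exists y, S y) -> exists d, is_dist S x d.
Proof.
  intros [y0 Hy0].
  set (E := fun s => exists y, S y /\ s = - norm (vsub x y)).
  assert (Hb : bound E).
  { exists 0. intros s [y [_ ->]]. pose proof (norm_nonneg _ (vsub x y)). lra. }
  destruct (completeness E Hb (ex_intro _ _ (ex_intro _ y0 (conj Hy0 eq_refl))))
    as [M [HM1 HM2]].
  exists (- M). split.
  - intros r [y [Sy ->]]. assert (E (- norm (vsub x y))) as Hy by (exists y; auto).
    specialize (HM1 _ Hy). lra.
  - intros b Hlow. assert (M <= - b); [|lra].
    apply HM2. intros s [y [Sy ->]].
    assert (b <= norm (vsub x y)) by (apply Hlow; exists y; auto). lra.
Qed.

Lemma dist_nonneg n (S : vec n -> Prop) x d : is_dist S x d -> 0 <= d.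
Proof. intros [_ H]. apply H. intros r [y [_ ->]]. apply norm_nonneg. Qed.

Lemma dist_unique n (S : vec n -> Prop) x d d' : is_dist S x d -> is_dist S x d' -> d = d'.
Proof. intros [H1 H2] [H1' H2']. apply Rle_antisym; auto. Qed.

Lemma dist_near n (S : vec n -> Prop) x d eps : is_dist S x d -> 0 < eps ->
  exists y, S y /\ norm (vsub x y) <= d + eps.
Proof.
  intros [H1 H2] He. apply NNPP. intro Hn.
  assert (d + eps <= d); [|lra].
  apply H2. intros r [y [Sy ->]].
  destruct (Rle_or_lt (norm (vsub x y)) (d + eps)) as [Hm|Hm]; [|lra].
  exfalso; apply Hn; exists y; auto.
Qed.

(* A bound c <= A r^2 + B r valid for every point of S at distance r from x
   (with A, B >= 0, so the bound increases with r) holds at r = dist(x, S). *)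
Lemma quadratic_bound_at_dist n (S : vec n -> Prop) x d A B c :
  0 <= A -> 0 <= B -> is_dist S x d ->
  (forall y, S y -> c <= A * norm (vsub x y) ^ 2 + B * norm (vsub x y)) ->
  c <= A * d ^ 2 + B * d.
Proof.
  intros HA HB Hd H. pose proof (dist_nonneg _ _ _ _ Hd) as Hd0.
  apply (le_of_le_add_eps _ _ (A * (2 * d + 1) + B)). intros eps Heps.
  destruct (dist_near _ _ _ _ eps Hd (proj1 Heps)) as [y [Sy Hy]].
  assert (Hlo : d <= norm (vsub x y)) by (apply (proj1 Hd); exists y; auto).
  specialize (H y Sy). set (r := norm (vsub x y)) in *.
  assert (r ^ 2 <= d ^ 2 + eps * (2 * d + 1)) by nra.
  nra.
Qed.

Lemma proj_variational n (X : vec n -> Prop) z p q :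
  convex_set X -> is_proj X z p -> X q -> dot (vsub z p) (vsub q p) <= 0.
Proof.
  intros Hc [Xp Hp] Xq.
  apply (le_of_le_add_eps _ _ (dot (vsub q p) (vsub q p) / 2)). intros t Ht.
  assert (Xqt : X (vadd (vscale t q) (vscale (1 - t) p))) by (apply Hc; auto; lra).
  assert (Hle : norm (vsub z p) ^ 2
                <= norm (vsub z (vadd (vscale t q) (vscale (1 - t) p))) ^ 2)
    by (apply pow_incr; split; [apply norm_nonneg | apply Hp, Xqt]).
  rewrite !norm_sq in Hle.
  rewrite (dot_sq_lincomb _ (vsub z (vadd (vscale t q) (vscale (1 - t) p)))
             (vsub z p) (vsub q p) 1 (- t)) in Hle
    by (intro i; unfold vsub, vadd, vscale; ring).
  pose proof (dot_nonneg _ (vsub q p)). nra.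
Qed.

Lemma proj_closer n (X : vec n -> Prop) z p q :
  convex_set X -> is_proj X z p -> X q -> norm (vsub p q) ^ 2 <= norm (vsub z q) ^ 2.
Proof.
  intros Hc Hp Xq. pose proof (proj_variational _ _ _ _ _ Hc Hp Xq) as Hvi.
  rewrite (norm_sym _ p q), !norm_sq,
    (dot_sq_lincomb _ (vsub z q) (vsub z p) (vsub q p) 1 (-1)) by (intro i; unfold vsub; ring).
  pose proof (dot_nonneg _ (vsub z p)). lra.
Qed.

Lemma subgrad_model_ineq n m (h : vec m -> R) (F : vec n -> vec m) (J : vec n -> mat m n)
  (x y z : vec n) err :
  subdiff_comp h F J x z ->
  Rabs (h (F y) - h (vadd (F x) (matvec (J x) (vsub y x)))) <= err ->
  dot z (vsub y x) <= h (F y) - h (F x) + err.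
Proof.
  intros [v [Hv ->]] Herr.
  specialize (Hv (vadd (F x) (matvec (J x) (vsub y x)))).
  assert (E : dot v (vsub (vadd (F x) (matvec (J x) (vsub y x))) (F x))
              = dot v (matvec (J x) (vsub y x)))
    by (unfold dot; apply fsum_ext; intros; unfold vsub, vadd; ring).
  rewrite E, dot_adj in Hv.
  pose proof (Rle_abs (- (h (F y) - h (vadd (F x) (matvec (J x) (vsub y x)))))) as Hab.
  rewrite Rabs_Ropp in Hab. lra.
Qed.

Lemma tube_radius_bound a b mu gamma d :
  0 < a -> d <= gamma * ((mu - 2 * b) / (2 * a)) -> 2 * a * d <= gamma * (mu - 2 * b).
Proof.
  intros Ha Hd. apply (Rmult_le_compat_l (2 * a)) in Hd; [|lra].
  replace (2 * a * (gamma * ((mu - 2 * b) / (2 * a)))) with (gamma * (mu - 2 * b))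
    in Hd by (field; lra). exact Hd.
Qed.

Lemma polyak_rate_arith a b mu L gamma g N d0 d1 :
  0 < a -> 0 <= b -> 2 * b < mu -> 0 < L -> 0 < gamma < 1 -> 0 <= d0 ->
  d0 <= gamma * ((mu - 2 * b) / (2 * a)) -> mu * d0 <= g -> 0 < N <= L ^ 2 ->
  d1 ^ 2 + g / N * g <= (1 + 2 * a * (g / N)) * d0 ^ 2 + 2 * b * (g / N) * d0 ->
  d1 ^ 2 <= (1 - (1 - gamma) * mu * (mu - 2 * b) / L ^ 2) * d0 ^ 2.
Proof.
  intros Ha Hb Hmu HL Hg Hd0 Htube Hsharp HN Hest.
  pose proof (tube_radius_bound _ _ _ _ _ Ha Htube) as Had.
  set (t := g / N) in *.
  assert (Hdecr : (1 - gamma) * (mu - 2 * b) * d0 <= g - 2 * a * d0 ^ 2 - 2 * b * d0) by nra.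
  assert (Ht : mu * d0 / L ^ 2 <= t).
  { unfold t, Rdiv. apply (Rle_trans _ (g * / L ^ 2)).
    - apply Rmult_le_compat_r; [apply Rlt_le, Rinv_0_lt_compat; nra | lra].
    - apply Rmult_le_compat_l; [nra|]. apply Rinv_le_contravar; lra. }
  assert (mu * d0 / L ^ 2 * ((1 - gamma) * (mu - 2 * b) * d0)
          <= t * (g - 2 * a * d0 ^ 2 - 2 * b * d0)).
  { apply Rmult_le_compat; try lra.
    - unfold Rdiv. apply Rmult_le_pos; [nra|]. apply Rlt_le, Rinv_0_lt_compat; nra.
    - apply Rmult_le_pos; [apply Rmult_le_pos|]; lra. }
  replace ((1 - (1 - gamma) * mu * (mu - 2 * b) / L ^ 2) * d0 ^ 2)
    with (d0 ^ 2 - mu * d0 / L ^ 2 * ((1 - gamma) * (mu - 2 * b) * d0)) by (field; lra).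
  nra.
Qed.

Section PolyakMethod.

Variables (n m : nat) (X : vec n -> Prop) (h : vec m -> R) (F : vec n -> vec m)
  (J : vec n -> mat m n) (fstar a b mu L gamma : R).

Local Notation Xs := (fun w => X w /\ h (F w) = fstar).

Hypothesis X_convex : convex_set X.
Hypothesis fstar_min : forall x, X x -> fstar <= h (F x).
Hypothesis a_pos : 0 < a.
Hypothesis b_nonneg : 0 <= b.
Hypothesis mu_gt : 2 * b < mu.
Hypothesis sharp : forall x d, X x -> is_dist Xs x d -> mu * d <= h (F x) - fstar.
Hypothesis model_approx : forall x y, X x -> X y ->
  Rabs (h (F y) - h (vadd (F x) (matvec (J x) (vsub y x))))
    <= a * (norm (vsub y x)) ^ 2 + b * norm (vsub y x).
Hypothesis L_bound : forall x z d, X x -> is_dist Xs x d ->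
  d <= (mu - 2 * b) / (2 * a) -> subdiff_comp h F J x z -> norm z <= L.
Hypothesis L_pos : 0 < L.
Hypothesis gamma_range : 0 < gamma < 1.

Lemma projected_step_estimate (x z p xb : vec n) t :
  X x -> X xb -> subdiff_comp h F J x z -> 0 <= t -> is_proj X (vsub x (vscale t z)) p ->
  norm (vsub p xb) ^ 2
    <= norm (vsub x xb) ^ 2
       + 2 * t * (h (F xb) - h (F x) + a * norm (vsub x xb) ^ 2 + b * norm (vsub x xb))
       + t ^ 2 * norm z ^ 2.
Proof.
  intros Xx Xb Hz Ht Hp.
  pose proof (subgrad_model_ineq _ _ _ _ _ _ _ _ _ Hz (model_approx _ _ Xx Xb)) as Hmod.
  rewrite (norm_sym _ xb x) in Hmod.
  eapply Rle_trans; [exact (proj_closer _ _ _ _ _ X_convex Hp Xb)|].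
  rewrite (norm_sq _ (vsub (vsub x (vscale t z)) xb)),
    (dot_sq_lincomb _ _ z (vsub xb x) (- t) (-1)) by (intro i; unfold vsub, vscale; ring).
  rewrite <- (norm_sq _ z), <- (norm_sq _ (vsub xb x)), (norm_sym _ xb x). nra.
Qed.

Lemma stationary_in_tube_optimal (x : vec n) d0 :
  X x -> subdiff_comp h F J x vzero -> is_dist Xs x d0 ->
  d0 <= gamma * ((mu - 2 * b) / (2 * a)) -> d0 = 0.
Proof.
  intros Xx Hz Hd Htube.
  assert (Hfar : h (F x) - fstar <= a * d0 ^ 2 + b * d0).
  { apply (quadratic_bound_at_dist _ Xs x); try lra; [exact Hd|].
    intros xb [Xb Hb].
    pose proof (subgrad_model_ineq _ _ _ _ _ _ _ _ _ Hz (model_approx _ _ Xx Xb)) as Hmod.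
    rewrite dot_zero_l, (norm_sym _ xb x) in Hmod. lra. }
  pose proof (sharp _ _ Xx Hd). pose proof (dist_nonneg _ _ _ _ Hd).
  pose proof (tube_radius_bound _ _ _ _ _ a_pos Htube) as Had.
  assert (a * d0 <= (mu - 2 * b) / 2) by nra.
  assert (a * d0 ^ 2 + b * d0 <= mu / 2 * d0) by nra.
  nra.
Qed.

Lemma polyak_step_contraction (x z p : vec n) d0 d1 :
  X x -> subdiff_comp h F J x z -> is_dist Xs x d0 ->
  d0 <= gamma * ((mu - 2 * b) / (2 * a)) ->
  (z = vzero -> p = x) ->
  (z <> vzero -> is_proj X (vsub x (vscale ((h (F x) - fstar) / norm z ^ 2) z)) p) ->
  is_dist Xs p d1 ->
  d1 ^ 2 <= (1 - (1 - gamma) * mu * (mu - 2 * b) / L ^ 2) * d0 ^ 2.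
Proof.
  intros Xx Hz Hd0 Htube Hstay Hproj Hd1.
  pose proof (dist_nonneg _ _ _ _ Hd0) as Hd0pos.
  destruct (classic (z = vzero)) as [Hz0|Hz0].
  - rewrite (Hstay Hz0) in Hd1. subst z.
    rewrite (dist_unique _ _ _ _ _ Hd1 Hd0),
            (stationary_in_tube_optimal _ _ Xx Hz Hd0 Htube). lra.
  - set (g := h (F x) - fstar) in *. set (N := norm z ^ 2) in *.
    assert (HN : 0 < N).
    { unfold N. rewrite norm_sq. pose proof (dot_nonneg _ z).
      destruct (Req_dec (dot z z) 0); [exfalso; apply Hz0, dot_self_eq0|]; lra. }
    assert (HNL : N <= L ^ 2).
    { unfold N. pose proof (norm_nonneg _ z). apply pow_incr; split; [lra|].
      apply (L_bound x z d0); auto. assert (gamma * ((mu - 2 * b) / (2 * a))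
        <= (mu - 2 * b) / (2 * a)); [|lra].
      assert (0 <= (mu - 2 * b) / (2 * a)) by (apply Rle_mult_inv_pos; lra). nra. }
    assert (Hg : 0 <= g) by (unfold g; pose proof (fstar_min x Xx); lra).
    assert (Ht : 0 <= g / N) by (apply Rle_mult_inv_pos; lra).
    apply (polyak_rate_arith a b mu L gamma g N); auto.
    + apply sharp; auto.
    + pose proof (dist_nonneg _ _ _ _ Hd1).
      apply (quadratic_bound_at_dist _ Xs x); try nra; [exact Hd0|].
      intros xb [Xb Hb].
      pose proof (projected_step_estimate x z p xb (g / N) Xx Xb Hz Ht (Hproj Hz0)) as Hest.
      assert (d1 <= norm (vsub p xb)) by (apply (proj1 Hd1); exists xb; auto).
      assert (d1 ^ 2 <= norm (vsub p xb) ^ 2) by (apply pow_incr; lra).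
      assert (Hstep : g / N * g = (g / N) ^ 2 * N) by (field; lra).
      assert (Hgap : fstar - h (F x) = - g) by (unfold g; ring).
      fold N in Hest. rewrite Hb, Hgap in Hest.
      set (t := g / N) in *. set (r := norm (vsub x xb)) in *. nra.
Qed.

Variables (xs zeta : nat -> vec n).
Hypothesis solution_exists : exists x, Xs x.
Hypothesis start_in_X : X (xs 0%nat).
Hypothesis start_in_tube : forall d, is_dist Xs (xs 0%nat) d ->
  d <= gamma * ((mu - 2 * b) / (2 * a)).
Hypothesis zeta_subgrad : forall k, subdiff_comp h F J (xs k) (zeta k).
Hypothesis step_zero : forall k, zeta k = vzero -> xs (S k) = xs k.
Hypothesis step_polyak : forall k, zeta k <> vzero ->
  is_proj X (vsub (xs k) (vscale ((h (F (xs k)) - fstar) / (norm (zeta k)) ^ 2) (zeta k)))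
    (xs (S k)).

Lemma polyak_iterates_in_tube k :
  X (xs k) /\ forall d, is_dist Xs (xs k) d -> d <= gamma * ((mu - 2 * b) / (2 * a)).
Proof.
  induction k as [|k [Xk Hk]]; [split; auto|]. split.
  - destruct (classic (zeta k = vzero)) as [Hz|Hz];
      [rewrite (step_zero k Hz); exact Xk | exact (proj1 (step_polyak k Hz))].
  - intros d Hd. destruct (dist_exists _ Xs (xs k) solution_exists) as [d0 Hd0].
    pose proof (polyak_step_contraction _ _ _ d0 d Xk (zeta_subgrad k) Hd0 (Hk d0 Hd0)
                  (step_zero k) (step_polyak k) Hd) as Hstep.
    pose proof (dist_nonneg _ _ _ _ Hd). pose proof (dist_nonneg _ _ _ _ Hd0).
    assert (0 <= (1 - gamma) * mu * (mu - 2 * b) / L ^ 2).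
    { apply Rle_mult_inv_pos; [apply Rmult_le_pos; [apply Rmult_le_pos|]; lra | nra]. }
    assert (d ^ 2 <= d0 ^ 2) by nra.
    pose proof (Hk d0 Hd0). nra.
Qed.

End PolyakMethod.

Theorem theorem7p6
  (n m : nat) (X : vec n -> Prop) (h : vec m -> R) (F : vec n -> vec m)
  (J : vec n -> mat m n) (fstar a b mu L gamma : R)
  (xs zeta : nat -> vec n) :
  (exists x : vec n, X x) -> convex_set X -> closed_vset X ->
  convex_fun h ->
  C1_with_jacobian F J ->
  (* fstar = min_X f, attained: X* = argmin_X f nonempty *)
  (exists x : vec n, X x /\ h (F x) = fstar) ->
  (forall x, X x -> fstar <= h (F x)) ->
  0 < a -> 0 <= b -> 2 * b < mu ->
  (* sharpness *)
  (forall x d, X x -> is_dist (fun z => X z /\ h (F z) = fstar) x d ->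
     mu * d <= h (F x) - fstar) ->
  (* two-sided model approximation *)
  (forall x y, X x -> X y ->
     Rabs (h (F y) - h (vadd (F x) (matvec (J x) (vsub y x))))
       <= a * (norm (vsub y x))^2 + b * norm (vsub y x)) ->
  (* L = sup of subgradient norms on the tube, finite and positive *)
  is_sup (fun r => exists (x z : vec n) (d : R), X x /\ is_dist (fun w => X w /\ h (F w) = fstar) x d /\
             d <= (mu - 2 * b) / (2 * a) /\ subdiff_comp h F J x z /\ r = norm z) L ->
  0 < L ->
  0 < gamma < 1 ->
  (* initial point *)
  X (xs 0%nat) ->
  (forall d, is_dist (fun w => X w /\ h (F w) = fstar) (xs 0%nat) d ->
     d <= gamma * ((mu - 2 * b) / (2 * a))) ->
  (* Polyak subgradient method *)
  (forall k, subdiff_comp h F J (xs k) (zeta k)) ->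
  (forall k, zeta k = vzero -> xs (S k) = xs k) ->
  (forall k, zeta k <> vzero ->
     is_proj X (vsub (xs k) (vscale ((h (F (xs k)) - fstar) / (norm (zeta k))^2) (zeta k)))
       (xs (S k))) ->
  forall k d1 d0,
    is_dist (fun w => X w /\ h (F w) = fstar) (xs (S k)) d1 ->
    is_dist (fun w => X w /\ h (F w) = fstar) (xs k) d0 ->
    d1 ^ 2 <= (1 - (1 - gamma) * mu * (mu - 2 * b) / L ^ 2) * d0 ^ 2.
Proof.
  intros _ Hconv _ _ _ Hsol Hmin Ha Hb Hmu Hsharp Happ [Hsup _] HL Hg
    X0 Htube0 Hsub Hstay Hproj k d1 d0 Hd1 Hd0.
  (* only the upper-bound half of the supremum is needed *)
  assert (HLb : forall x z d, X x -> is_dist (fun w => X w /\ h (F w) = fstar) x d ->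
            d <= (mu - 2 * b) / (2 * a) -> subdiff_comp h F J x z -> norm z <= L)
    by (intros x z d Xx Hd Hdc Hz; apply Hsup; exists x, z, d; auto).
  destruct (polyak_iterates_in_tube n m X h F J fstar a b mu L gamma Hconv Hmin Ha Hb Hmu
              Hsharp Happ HLb HL Hg xs zeta Hsol X0 Htube0 Hsub Hstay Hproj k) as [Xk Hk].
  exact (polyak_step_contraction n m X h F J fstar a b mu L gamma Hconv Hmin Ha Hb Hmu
           Hsharp Happ HLb HL Hg _ _ _ d0 d1 Xk (Hsub k) Hd0 (Hk d0 Hd0)
           (Hstay k) (Hproj k) Hd1).
Qed.
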